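(* Let $a,b,m$ be parameters. The power series $$\left(\frac{1+ax}{1+bx},\ \frac{mx(1+ax)}{(1+bx)^2}\right)\cdot c(x)=\frac{1+ax}{1+bx}\,c\!\left(\frac{mx(1+ax)}{(1+bx)^2}\right)$$ is the generating function of the sequence $(a_n)_{n\ge0}$ determined by $a_0=1$, $a_1=a-b+m$, and, for $n\ge2$, $$a_n=(2m-b)\,a_{n-1}+m\sum_{k=0}^{n-3}a_{k+1}a_{n-k-2}.$$
   Context: $c(x)=\frac{1-\sqrt{1-4x}}{2x}$ is the generating function of the Catalan numbers. For power series $g(x)$ with $g(0)\neq0$ and $f(x)$ with $f(0)=0$, the Riordan array $(g,f)$ acts on a power series $h(x)$ by $(g,f)\cdot h(x)=g(x)h(f(x))$. *)

From mathcomp Require Import all_boot all_order all_algebra.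
Set Implicit Arguments. Unset Strict Implicit. Unset Printing Implicit Defensive.
Import GRing.Theory.
Local Open Scope ring_scope.

Definition fps (R : comNzRingType) := nat -> R.

Section FPS.
Variable R : comNzRingType.

Definition fps1 : fps R := fun n => (n == 0%N)%:R.

Definition fps_mul (p q : fps R) : fps R :=
  fun n => \sum_(i < n.+1) p i * q (n - i)%N.

Definition fps_exp (p : fps R) (k : nat) : fps R := iter k (fps_mul p) fps1.

(* composition h(f(x)), meaningful when f 0 = 0 *)
Definition fps_comp (h f : fps R) : fps R :=
  fun n => \sum_(k < n.+1) h k * fps_exp f k n.

(* Riordan array action: (g, f) . h = g(x) h(f(x)) *)
Definition riordan_act (g f h : fps R) : fps R := fps_mul g (fps_comp h f).

Definition fps_lin (c : R) : fps R :=
  fun n => if n == 0%N then 1 else if n == 1%N then c else 0.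

(* 1/(1 + c x) = sum_n (-c)^n x^n *)
Definition fps_inv_lin (c : R) : fps R := fun n => (- c) ^+ n.

Definition fps_shift (p : fps R) : fps R :=
  fun n => if n is n'.+1 then p n' else 0.

Definition fps_scale (m : R) (p : fps R) : fps R := fun n => m * p n.

Lemma fps_inv_linP (c : R) n : fps_mul (fps_lin c) (fps_inv_lin c) n = fps1 n.
Proof.
rewrite /fps_mul /fps1 /fps_lin /fps_inv_lin.
case: n => [|n]; first by rewrite big_ord_recl big_ord0 /= subn0 expr0 mulr1 addr0.
rewrite big_ord_recl big_ord_recl /= big1 ?addr0; last first.
  by move=> i _; rewrite /bump /= mul0r.
rewrite /bump /= !subn0 mul1r exprS mulNr.
by rewrite addn0 subn1 /= addNr.
Qed.

End FPS.

(* Catalan generating function c(x) = (1 - sqrt(1-4x))/(2x): coefficients are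
   the Catalan numbers binom(2n,n)/(n+1) (the division is exact). *)
Definition catalan (n : nat) : nat := 'C(n.*2, n) %/ n.+1.
Definition catalan_fps (R : comNzRingType) : fps R := fun n => (catalan n)%:R.

Definition rg (R : comNzRingType) (a b : R) : fps R :=
  fps_mul (fps_lin a) (fps_inv_lin b).

Definition rf (R : comNzRingType) (a b m : R) : fps R :=
  fps_scale m (fps_shift (fps_mul (fps_lin a)
                  (fps_mul (fps_inv_lin b) (fps_inv_lin b)))).

From mathcomp Require Import all_boot all_order all_algebra.
From mathcomp Require Import zify.
From Stdlib Require Import FunctionalExtensionality Ring.
Set Implicit Arguments.
Unset Strict Implicit.
Unset Printing Implicit Defensive.
Import GRing.Theory.

(* Composing the Catalan equation c = 1 + x c^2 with f gives c(f) = 1 + f c(f)^2,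
   and multiplying by 1 + a x turns it into the functional equation
   (1 + b x) F = (1 + a x) + m x F^2 for F = (g, f) . c; the coefficient of x^n
   of this equation is the recurrence, which determines the sequence.
   Identities of formal power series are checked coefficientwise: the n-th
   coefficient of a product or composition only depends on truncations at
   degree n, so the laws needed are inherited from {poly R}. Segner's
   convolution for the Catalan numbers is derived from the binomial closed form
   via (n + 2) c_(n+1) = (4 n + 2) c_n. *)

Lemma catalan_mul_succ n : catalan n * n.+1 = 'C(n.*2, n).
Proof.
have binS_eq : n.+1 * 'C(n.*2, n.+1) = n * 'C(n.*2, n).
  by rewrite mul_bin_left -addnn addnK.
have dvd : n.+1 %| 'C(n.*2, n).
  by rewrite -[X in _ %| X]mul1n -(subSnn n) mulnBl -binS_eq -mulnBr dvdn_mulr.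
by rewrite /catalan divnK.
Qed.

Lemma mul_bin_central_succ n :
  n.+1 * 'C(n.*2.+2, n.+1) = (4 * n + 2) * 'C(n.*2, n).
Proof.
have outer := mul_bin_diag n.*2.+2 n.
have inner := mul_bin_diag n.*2.+1 n.
have sym : 'C(n.*2.+1, n.+1) = 'C(n.*2.+1, n).
  by rewrite -[in RHS]bin_sub; [congr 'C(_, _) | ]; lia.
rewrite /= sym in outer inner.
by move: outer inner; rewrite -!addnn; nia.
Qed.

Lemma catalan_succ n : catalan n.+1 * n.+2 = (4 * n + 2) * catalan n.
Proof.
apply/eqP; rewrite -(eqn_pmul2l (ltn0Sn n)); apply/eqP.
rewrite catalan_mul_succ doubleS mul_bin_central_succ -catalan_mul_succ.
by rewrite [catalan n * _]mulnC mulnCA.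
Qed.

Lemma catalan_conv_index n :
  2 * \sum_(i < n.+1) i * (catalan i * catalan (n - i))
  = n * \sum_(i < n.+1) catalan i * catalan (n - i).
Proof.
rewrite mul2n -addnn {2}(reindex_inj rev_ord_inj) -big_split big_distrr /=.
apply: eq_bigr => i _; rewrite subSS subKn -1?ltnS //.
by rewrite [catalan (n - i) * _]mulnC -mulnDl subnKC // -ltnS.
Qed.

Lemma catalan_conv_index_succ n :
  \sum_(i < n.+2) i.+1 * (catalan i * catalan (n.+1 - i))
  = catalan n.+1 + 4 * \sum_(i < n.+1) i * (catalan i * catalan (n - i))
    + 2 * \sum_(i < n.+1) catalan i * catalan (n - i).
Proof.
rewrite big_ord_recl /= subn0 mul1n -addnA; congr (_ + _); first exact: mul1n.
rewrite !big_distrr -big_split; apply: eq_bigr => i _ /=.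
rewrite /bump /= add1n subSS mulnA [_.+2 * _]mulnC catalan_succ; nia.
Qed.

Lemma catalan_convolution n :
  catalan n.+1 = \sum_(i < n.+1) catalan i * catalan (n - i).
Proof.
elim: n => [|n IH]; first by rewrite big_ord1.
apply/eqP; rewrite -(eqn_pmul2r (ltn0Sn n.+2)); apply/eqP.
(* Evaluate \sum_i (i + 1) c_i c_(n+1-i) once by symmetry and once by catalan_succ. *)
have weighted : \sum_(i < n.+2) i.+1 * (catalan i * catalan (n.+1 - i))
    = \sum_(i < n.+2) i * (catalan i * catalan (n.+1 - i))
      + \sum_(i < n.+2) catalan i * catalan (n.+1 - i).
  by rewrite -big_split; apply: eq_bigr => i _; rewrite mulSn addnC.
have := catalan_conv_index n.+1; have := catalan_conv_index n.
have := catalan_conv_index_succ n; rewrite weighted -IH catalan_succ.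
nia.
Qed.

Local Open Scope ring_scope.

Section PolyComposition.
Variable R : comNzRingType.
Implicit Types P F : {poly R}.

Lemma coef_exp_vanish F i k : F`_0 = 0 -> (k < i)%N -> (F ^+ i)`_k = 0.
Proof.
move=> F0 lt_ki; have /factor_theorem[Q ->] : root F 0 by rewrite rootE horner_coef0 F0.
by rewrite subr0 exprMn coefMXn lt_ki.
Qed.

Lemma big_ord_narrow_vanish (G : nat -> R) n1 n2 : (n1 <= n2)%N ->
  (forall i, (n1 <= i < n2)%N -> G i = 0) -> \sum_(i < n2) G i = \sum_(i < n1) G i.
Proof.
move=> le_n12 G0; rewrite (big_ord_widen n2 G le_n12) [RHS]big_mkcond /=.
by apply: eq_bigr => i _; case: ltnP => // le_n1i; rewrite G0 // le_n1i /=.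
Qed.

Lemma coef_comp_poly_low P F k : F`_0 = 0 ->
  (P \Po F)`_k = \sum_(i < k.+1) P`_i * (F ^+ i)`_k.
Proof.
move=> F0; pose G i := P`_i * (F ^+ i)`_k.
rewrite coef_comp_poly -(@big_ord_narrow_vanish G _ (size P + k.+1)) ?leq_addr //.
  apply: big_ord_narrow_vanish; first exact: leq_addl.
  by move=> i /andP[lt_ki _]; rewrite /G coef_exp_vanish ?mulr0.
by move=> i /andP[le_Pi _]; rewrite /G nth_default ?mul0r.
Qed.

End PolyComposition.

Section FormalPowerSeries.
Variable R : comNzRingType.
Implicit Types (p q r f h : fps R) (P Q F H : {poly R}).

Definition fps0 : fps R := fun=> 0.
Definition fps_add p q : fps R := fun n => p n + q n.
Definition fpsC (c : R) : fps R := fun n => if n == 0%N then c else 0.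
Definition fpsX : fps R := fun n => (n == 1%N)%:R.

Definition fps_agree n P p := forall i, (i <= n)%N -> P`_i = p i.
Definition fps_trunc n p : {poly R} := \poly_(i < n.+1) p i.

Lemma fps_agree_trunc n p : fps_agree n (fps_trunc n p) p.
Proof. by move=> i le_in; rewrite coef_poly ltnS le_in. Qed.

Lemma fps_agree1 n : fps_agree n 1 (fps1 R).
Proof. by move=> i _; rewrite coef1. Qed.

Lemma fps_agreeX n : fps_agree n 'X fpsX.
Proof. by move=> i _; rewrite coefX. Qed.

Lemma fps_agreeM n P Q p q :
  fps_agree n P p -> fps_agree n Q q -> fps_agree n (P * Q) (fps_mul p q).
Proof.
move=> Pp Qq k le_kn; rewrite coefM; apply: eq_bigr => i _.
have le_ik : (i <= k)%N by rewrite -ltnS.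
by rewrite Pp ?Qq // (leq_trans _ le_kn) ?leq_subr.
Qed.

Lemma fps_agree_exp n F f k :
  fps_agree n F f -> fps_agree n (F ^+ k) (fps_exp f k).
Proof.
move=> Ff; elim: k => [|k IHk]; first exact: fps_agree1.
by rewrite exprS; apply: fps_agreeM.
Qed.

Lemma fps_agree_comp n H F h f : f 0%N = 0 ->
  fps_agree n H h -> fps_agree n F f -> fps_agree n (H \Po F) (fps_comp h f).
Proof.
move=> f0 Hh Ff k le_kn; rewrite coef_comp_poly_low ?Ff //.
apply: eq_bigr => i _; have le_ik : (i <= k)%N by rewrite -ltnS.
by rewrite Hh ?(fps_agree_exp i Ff) // (leq_trans le_ik le_kn).
Qed.

Lemma fps_eq_agree p q :
  (forall n, exists P, fps_agree n P p /\ fps_agree n P q) -> p = q.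
Proof.
move=> pq; apply: functional_extensionality => n.
by have [P [Pp Pq]] := pq n; rewrite -Pp // -Pq.
Qed.

Lemma fps_mulA p q r : fps_mul p (fps_mul q r) = fps_mul (fps_mul p q) r.
Proof.
apply: fps_eq_agree => n; set T := fps_trunc n.
exists (T p * (T q * T r)); split; last rewrite mulrA.
all: by do ![apply: fps_agreeM | apply: fps_agree_trunc].
Qed.

Lemma fps_mulC p q : fps_mul p q = fps_mul q p.
Proof.
apply: fps_eq_agree => n; set T := fps_trunc n.
exists (T p * T q); split; last rewrite mulrC.
all: by do ![apply: fps_agreeM | apply: fps_agree_trunc].
Qed.

Lemma fps_mul1 p : fps_mul (fps1 R) p = p.
Proof.
apply: fps_eq_agree => n; exists (1 * fps_trunc n p); split; last rewrite mul1r.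
all: by do ![apply: fps_agreeM | apply: fps_agree_trunc | apply: fps_agree1].
Qed.

Lemma fps_mul0 p : fps_mul fps0 p = fps0.
Proof.
by apply: functional_extensionality => n; rewrite /fps_mul big1 // => i _; rewrite mul0r.
Qed.

Lemma fps_mulDl p q r : fps_mul (fps_add p q) r = fps_add (fps_mul p r) (fps_mul q r).
Proof.
apply: functional_extensionality => n.
by rewrite /fps_add /fps_mul -big_split; apply: eq_bigr => i _; rewrite mulrDl.
Qed.

Lemma fps_semiring : semi_ring_theory fps0 (fps1 R) fps_add (@fps_mul R) eq.
Proof.
split=> [p|p q|p q r|p|p|p q|p q r|p q r].
- by apply: functional_extensionality => n; rewrite /fps_add add0r.
- by apply: functional_extensionality => n; rewrite /fps_add addrC.
- by apply: functional_extensionality => n; rewrite /fps_add addrA.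
- exact: fps_mul1.
- exact: fps_mul0.
- exact: fps_mulC.
- exact: fps_mulA.
- exact: fps_mulDl.
Qed.

Add Ring fps_semiring : fps_semiring.

Lemma fps_mul_coefS p q n :
  fps_mul p q n.+1 = p 0%N * q n.+1 + \sum_(i < n) p i.+1 * q (n - i)%N + p n.+1 * q 0%N.
Proof. by rewrite /fps_mul big_ord_recl big_ord_recr /= subn0 subnn addrA. Qed.

Lemma fps_comp_add h1 h2 f :
  fps_comp (fps_add h1 h2) f = fps_add (fps_comp h1 f) (fps_comp h2 f).
Proof.
apply: functional_extensionality => n.
by rewrite /fps_add /fps_comp -big_split; apply: eq_bigr => i _; rewrite mulrDl.
Qed.

Lemma fps_comp_mul h1 h2 f : f 0%N = 0 ->
  fps_comp (fps_mul h1 h2) f = fps_mul (fps_comp h1 f) (fps_comp h2 f).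
Proof.
move=> f0; apply: fps_eq_agree => n; set T := fps_trunc n.
exists ((T h1 * T h2) \Po T f); split; last rewrite comp_polyM.
all: by do ![apply: fps_agreeM | apply: fps_agree_comp | apply: fps_agree_trunc].
Qed.

Lemma fps_comp1 f : fps_comp (fps1 R) f = fps1 R.
Proof.
apply: functional_extensionality => n.
by rewrite /fps_comp big_ord_recl big1 ?addr0 ?mul1r // => i _; rewrite mul0r.
Qed.

Lemma fps_compX f : f 0%N = 0 -> fps_comp fpsX f = f.
Proof.
move=> f0; apply: fps_eq_agree => n; exists ('X \Po fps_trunc n f).
split; last rewrite comp_polyX.
all: by do ![apply: fps_agree_comp | apply: fps_agree_trunc | apply: fps_agreeX].
Qed.

Lemma fps_scaleE c p : fps_scale c p = fps_mul (fpsC c) p.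
Proof.
apply: functional_extensionality => n.
by rewrite /fps_mul big_ord_recl big1 ?addr0 ?subn0 // => i _; rewrite mul0r.
Qed.

Lemma fps_shiftE p : fps_shift p = fps_mul fpsX p.
Proof.
apply: functional_extensionality => -[|n]; first by rewrite /fps_mul big_ord1 mul0r.
rewrite /fps_mul big_ord_recl big_ord_recl big1 => [|i _]; last by rewrite mul0r.
by rewrite /= mul0r mul1r add0r addr0 subSS subn0.
Qed.

Lemma fps_linE c : fps_lin c = fps_add (fps1 R) (fps_mul (fpsC c) fpsX).
Proof.
apply: functional_extensionality => n; rewrite -fps_scaleE /fps_add /fps_scale.
by case: n => [|[|n]]; rewrite /= ?mulr0 ?mulr1 ?addr0 ?add0r.
Qed.

Lemma fps_mul_inv_lin c : fps_mul (fps_lin c) (fps_inv_lin c) = fps1 R.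
Proof. by apply: functional_extensionality => n; apply: fps_inv_linP. Qed.

Lemma fps_mul_lin c p : fps_mul (fps_lin c) p = fps_add p (fps_scale c (fps_shift p)).
Proof. rewrite fps_linE fps_scaleE fps_shiftE; ring. Qed.

Lemma catalan_fps_eq :
  catalan_fps R = fps_add (fps1 R) (fps_mul fpsX (fps_mul (catalan_fps R) (catalan_fps R))).
Proof.
apply: functional_extensionality => n; rewrite -fps_shiftE /fps_add.
case: n => [|n]; first by rewrite addr0.
rewrite /= add0r /catalan_fps catalan_convolution natr_sum.
by apply: eq_bigr => i _; rewrite natrM.
Qed.

Lemma fps_comp_catalan f : f 0%N = 0 ->
  let C := fps_comp (catalan_fps R) f in C = fps_add (fps1 R) (fps_mul f (fps_mul C C)).
Proof.
by move=> f0 /=; rewrite {1}catalan_fps_eq fps_comp_add fps_comp1 !fps_comp_mul ?fps_compX.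
Qed.

Lemma riordan_catalan_eq a b m :
  let F := riordan_act (rg a b) (rf a b m) (catalan_fps R) in
  fps_mul (fps_lin b) F = fps_add (fps_lin a) (fps_scale m (fps_shift (fps_mul F F))).
Proof.
have f0 : rf a b m 0%N = 0 by rewrite /rf /fps_scale /= mulr0.
have := fps_comp_catalan f0; rewrite /riordan_act /rg /rf.
set C := fps_comp _ _; rewrite !fps_scaleE !fps_shiftE => C_eq /=.
have inv := fps_mul_inv_lin b.
rewrite {1}C_eq; ring [inv].
Qed.

End FormalPowerSeries.

Section ConvolutionRecurrence.
Variables (R : comNzRingType) (b m : R).

Definition conv_rec (s : nat -> R) n :=
  (2%:R * m - b) * s n.-1 + m * \sum_(0 <= k < n - 2) s k.+1 * s (n - k - 2)%N.

Lemma eq_conv_rec s t n : (0 < n)%N -> (forall i, (i < n)%N -> s i = t i) ->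
  conv_rec s n = conv_rec t n.
Proof.
move=> n_gt0 st; rewrite /conv_rec st ?ltn_predL //; congr (_ + m * _).
by apply: eq_big_nat => k /andP[_ lt_k]; rewrite !st //; lia.
Qed.

Lemma conv_rec_unique s t : s 0%N = t 0%N -> s 1%N = t 1%N ->
  (forall n, (2 <= n)%N -> s n = conv_rec s n) ->
  (forall n, (2 <= n)%N -> t n = conv_rec t n) -> s =1 t.
Proof.
move=> st0 st1 s_rec t_rec; elim/ltn_ind=> -[|[|n]] IH //.
by rewrite s_rec // t_rec // (eq_conv_rec _ IH).
Qed.

End ConvolutionRecurrence.

Section RiordanCatalan.
Variables (R : comNzRingType) (a b m : R).
Local Notation F := (riordan_act (rg a b) (rf a b m) (catalan_fps R)).

Lemma riordan_catalan_coef n :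
  F n + b * fps_shift F n = fps_lin a n + m * fps_shift (fps_mul F F) n.
Proof. by have := congr1 (fun p => p n) (riordan_catalan_eq a b m); rewrite fps_mul_lin. Qed.

Lemma riordan_catalan0 : F 0%N = 1.
Proof. by have := riordan_catalan_coef 0; rewrite /= !mulr0 !addr0. Qed.

Lemma riordan_catalan1 : F 1%N = a - b + m.
Proof.
have := riordan_catalan_coef 1; rewrite /= /fps_mul big_ord1 riordan_catalan0 !mulr1.
by move/(canRL (addrK _)); rewrite addrAC.
Qed.

Lemma riordan_catalan_rec n : (2 <= n)%N -> F n = conv_rec b m F n.
Proof.
case: n => [|[|n]] // _; have := riordan_catalan_coef n.+2.
rewrite /= fps_mul_coefS riordan_catalan0 add0r mul1r mulr1 => /(canRL (addrK _)) ->.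
rewrite /conv_rec /= subn2 /= big_mkord.
under [in RHS]eq_bigr => i _ do rewrite -subnDA addn2 !subSS.
rewrite mulrBl [RHS]addrAC; congr (_ - _).
by rewrite !mulrDr -mulrA mulr_natl mulr2n addrAC.
Qed.

End RiordanCatalan.

Theorem mainTheorem4 (R : comNzRingType) (a b m : R) (s : nat -> R) :
  s 0%N = 1 ->
  s 1%N = a - b + m ->
  (forall n : nat, (2 <= n)%N ->
     s n = (2%:R * m - b) * s n.-1
           + m * \sum_(0 <= k < n - 2) s k.+1 * s (n - k - 2)%N) ->
  forall n : nat, riordan_act (rg a b) (rf a b m) (catalan_fps R) n = s n.
Proof.
move=> s0 s1 s_rec; apply: conv_rec_unique s_rec.
- by rewrite riordan_catalan0 s0.
- by rewrite riordan_catalan1 s1.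
- exact: riordan_catalan_rec.
Qed.
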